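(* Let $(V,E)$ be a finite graph and $p\in[0,1]$. Define rates on $\{0,1\}^E\times\{-1,1\}^V$ as follows: (a) if $\sigma'=\sigma$ and there is $e\in E$ with $\eta'=\eta^e$ and $\gamma_\eta(e)=1$, then $c((\eta,\sigma),(\eta',\sigma'))=\big((1-p)\mathbf 1_{\eta(e)=1}+p\mathbf 1_{\eta(e)=0}\big)\mathbf 1_{(\eta,\sigma)\in\mathcal C}$; (b) if $\sigma'=\sigma$ and there is $e\in E$ with $\eta'=\eta^e$, $\gamma_\eta(e)=0$ and $\delta_\sigma(e)=1$, then $c((\eta,\sigma),(\eta',\sigma'))=\frac12\big((1-p)\mathbf 1_{\eta(e)=1}+p\mathbf 1_{\eta(e)=0}\big)\mathbf 1_{(\eta,\sigma)\in\mathcal C}$; (c) if there are $x\in V$ and $e\in E_x$ with $\eta'=\eta^e$, $\gamma_\eta(e)=0$, $\eta(e)=\delta_\sigma(e)$, and $\sigma'(y)=-\sigma(y)$ for the vertices $y$ connected to $x$ by an open path of $\eta$ not using $e$ (including $y=x$), $\sigma'(y)=\sigma(y)$ otherwise, then $c((\eta,\sigma),(\eta',\sigma'))=\frac14\big((1-p)\mathbf 1_{\eta(e)=1}\mathbf 1_{(\eta,\sigma)\in\mathcal C}+p\mathbf 1_{\eta(e)=0}\mathbf 1_{(\eta',\sigma')\in\mathcal C}\big)$; (d) all other off-diagonal rates are $0$. Let $\eta\in\{0,1\}^E$, $e\in E$ and $\sigma\in\{-1,1\}^V$ with $(\eta,\sigma)\in\mathcal C$. Then, with sums over $\sigma'\in\{-1,1\}^V$: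 if $\gamma_\eta(e)=1$, $\sum_{\sigma'}c((\eta,\sigma),(\eta^e,\sigma'))=p\mathbf 1_{\eta(e)=0}+(1-p)\mathbf 1_{\eta(e)=1}$; if $\gamma_\eta(e)=0$ and $\eta(e)=0$, the sum equals $p/2$; if $\gamma_\eta(e)=0$ and $\eta(e)=1$, the sum equals $1-p$.
   Context: Edge configurations $\eta\in\{0,1\}^E$ (1 = open), spin configurations $\sigma\in\{-1,1\}^V$. For $e=\langle x,y\rangle$, $\delta_\sigma(e)=\mathbf 1_{\sigma(x)=\sigma(y)}$. $\mathcal C=\{(\eta,\sigma):\eta(e)\le\delta_\sigma(e)\ \forall e\in E\}$. $E_x$ is the set of edges with endvertex $x$; $\eta^e$ is $\eta$ with the value at $e$ changed. For $e=\langle x,y\rangle$, $\gamma_\eta(e)=1$ if $x,y$ are connected by a path of open edges of $\eta$ not using $e$, and $0$ otherwise. *)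

From HB Require Import structures.
From mathcomp Require Import all_boot all_order all_algebra.
Set Implicit Arguments. Unset Strict Implicit. Unset Printing Implicit Defensive.
Import Order.TTheory GRing.Theory Num.Theory.
Local Open Scope ring_scope.

(* Edge configurations eta : {ffun E -> bool} (true = open).
   Spin configurations sigma : {ffun V -> bool} (true = +1, false = -1). *)
Section Defs.
Variables (V E : finType) (src tgt : E -> V).

Definition delta (sigma : {ffun V -> bool}) (e : E) : bool :=
  sigma (src e) == sigma (tgt e).

Definition inC (eta : {ffun E -> bool}) (sigma : {ffun V -> bool}) : bool :=
  [forall f, eta f ==> delta sigma f].

Definition flipE (eta : {ffun E -> bool}) (e : E) : {ffun E -> bool} :=
  [ffun f => if f == e then ~~ eta f else eta f].

Definition adj_wo (eta : {ffun E -> bool}) (e : E) : rel V :=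
  fun x y => [exists f, [&& f != e, eta f &
     ((src f == x) && (tgt f == y)) || ((src f == y) && (tgt f == x))]].

Definition conn_wo (eta : {ffun E -> bool}) (e : E) (x y : V) : bool :=
  connect (adj_wo eta e) x y.

Definition gamma (eta : {ffun E -> bool}) (e : E) : bool :=
  conn_wo eta e (src e) (tgt e).

Definition flip_cluster (eta : {ffun E -> bool}) (e : E) (x : V)
  (sigma : {ffun V -> bool}) : {ffun V -> bool} :=
  [ffun y => if conn_wo eta e x y then ~~ sigma y else sigma y].

Variables (R : realFieldType) (p : R).

(* the transition rates c((eta,sigma),(eta',sigma')) as in (a)-(d);
   the edge e with eta' = eta^e is unique when it exists. *)
Definition rate (eta : {ffun E -> bool}) (sigma : {ffun V -> bool})
  (eta' : {ffun E -> bool}) (sigma' : {ffun V -> bool}) : R :=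
  match [pick e | flipE eta e == eta'] with
  | None => 0
  | Some e =>
    let w := (1 - p) * (eta e)%:R + p * (~~ eta e)%:R in
    if gamma eta e then
      (if sigma' == sigma then w * (inC eta sigma)%:R else 0)
    else if (sigma' == sigma) && delta sigma e then
      2^-1 * w * (inC eta sigma)%:R
    else if [exists x, ((x == src e) || (x == tgt e)) &&
                       (sigma' == flip_cluster eta e x sigma)]
            && (eta e == delta sigma e) then
      4^-1 * ((1 - p) * (eta e)%:R * (inC eta sigma)%:R
              + p * (~~ eta e)%:R * (inC eta' sigma')%:R)
    else 0
  end.

End Defs.

(* Since flipE is injective in the edge, only rates through the edge e enter
   the sum.  If gamma(e) = 1, only sigma' = sigma contributes.  If gamma(e) = 0,
   the endpoints of e lie in distinct open clusters of eta minus e, so the two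
   cluster flips of (c) differ from each other and from sigma; each reverses
   delta at e and keeps it on every other open edge, so (eta^e, flipped spins)
   is again in C when eta(e) = delta(e) = 0.  With w the flip weight, rule (b)
   then contributes w/2 when delta(e) = 1, and rule (c) contributes w/4 twice
   when eta(e) = delta(e). *)
From HB Require Import structures.
From mathcomp Require Import all_boot all_order all_algebra.
From mathcomp Require Import ring.
Set Implicit Arguments. Unset Strict Implicit. Unset Printing Implicit Defensive.
Import Order.TTheory GRing.Theory Num.Theory.
Local Open Scope ring_scope.

Section Clusters.
Variables (V E : finType) (src tgt : E -> V).

Local Notation delta := (delta src tgt).
Local Notation inC := (inC src tgt).
Local Notation conn_wo := (conn_wo src tgt).
Local Notation gamma := (gamma src tgt).
Local Notation flip_cluster := (flip_cluster src tgt).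

Lemma flipE_inj (eta : {ffun E -> bool}) : injective (flipE eta).
Proof.
move=> e1 e2 /(congr1 (fun g : {ffun E -> bool} => g e2)); rewrite !ffunE eqxx.
by case: eqP => // _; case: (eta e2).
Qed.

Lemma pick_flipE (eta : {ffun E -> bool}) (e : E) :
  [pick e' | flipE eta e' == flipE eta e] = Some e.
Proof. by case: pickP => [e' /eqP/flipE_inj -> // | /(_ e)]; rewrite eqxx. Qed.

Variables (eta : {ffun E -> bool}) (e : E).

Lemma adj_wo_sym : symmetric (adj_wo src tgt eta e).
Proof. by move=> x y; apply/existsP/existsP => -[f]; rewrite orbC; exists f. Qed.

Lemma conn_wo_sym x y : conn_wo eta e x y = conn_wo eta e y x.
Proof. exact: (sym_connect_sym adj_wo_sym). Qed.

Lemma conn_wo_open_edge x f : f != e -> eta f ->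
  conn_wo eta e x (src f) = conn_wo eta e x (tgt f).
Proof.
move=> nfe etaf; have adj_f : adj_wo src tgt eta e (src f) (tgt f).
  by apply/existsP; exists f; rewrite nfe etaf !eqxx.
apply/idP/idP => conn_x; apply: connect_trans conn_x (connect1 _) => //.
by rewrite adj_wo_sym.
Qed.

Lemma flip_cluster_id x sigma : flip_cluster eta e x sigma x = ~~ sigma x.
Proof. by rewrite ffunE /conn_wo connect0. Qed.

Lemma flip_cluster_out x y sigma : ~~ conn_wo eta e x y ->
  flip_cluster eta e x sigma y = sigma y.
Proof. by rewrite ffunE => /negbTE ->. Qed.

Lemma delta_flip_cluster x sigma f : f != e -> eta f ->
  delta (flip_cluster eta e x sigma) f = delta sigma f.
Proof.
move=> nfe etaf; rewrite /delta !ffunE (conn_wo_open_edge x nfe etaf).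
by case: conn_wo; rewrite // eqb_negLR negbK.
Qed.

Lemma inC_flip_cluster x sigma : inC eta sigma ->
  delta (flip_cluster eta e x sigma) e -> inC (flipE eta e) (flip_cluster eta e x sigma).
Proof.
move=> /forallP hC delta_e; apply/forallP => f; rewrite ffunE.
have [-> | nfe] := eqVneq f e; first by rewrite delta_e implybT.
by apply/implyP => etaf; rewrite delta_flip_cluster //; exact: implyP (hC f) etaf.
Qed.

Lemma flip_cluster_neq x sigma : flip_cluster eta e x sigma != sigma.
Proof.
apply/eqP => /(congr1 (fun g : {ffun V -> bool} => g x)).
by rewrite flip_cluster_id; case: (sigma x).
Qed.

Section NotGamma.
Hypothesis ngamma : ~~ gamma eta e.

Lemma conn_wo_endpoints : ~~ conn_wo eta e (src e) (tgt e) /\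
  ~~ conn_wo eta e (tgt e) (src e).
Proof. by split; rewrite // conn_wo_sym. Qed.

Lemma delta_flip_cluster_edge x sigma : (x == src e) || (x == tgt e) ->
  delta (flip_cluster eta e x sigma) e = ~~ delta sigma e.
Proof.
have [nst nts] := conn_wo_endpoints.
by rewrite /delta; case/orP => /eqP ->; rewrite flip_cluster_id flip_cluster_out //;
  case: (sigma _); case: (sigma _).
Qed.

Lemma flip_cluster_src_tgt_neq sigma :
  flip_cluster eta e (src e) sigma != flip_cluster eta e (tgt e) sigma.
Proof.
have [_ nts] := conn_wo_endpoints.
apply/eqP => /(congr1 (fun g : {ffun V -> bool} => g (src e))).
by rewrite flip_cluster_id flip_cluster_out //; case: (sigma _).
Qed.

End NotGamma.
End Clusters.

Section FlipRates.
Variables (V E : finType) (src tgt : E -> V) (R : realFieldType) (p : R).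
Variables (eta : {ffun E -> bool}) (e : E) (sigma : {ffun V -> bool}).
Hypothesis hC : inC src tgt eta sigma.

Local Notation delta := (delta src tgt).
Local Notation gamma := (gamma src tgt).
Local Notation s x := (flip_cluster src tgt eta e x sigma).
Local Notation c := (rate src tgt p eta sigma (flipE eta e)).
Local Notation w := ((1 - p) * (eta e)%:R + p * (~~ eta e)%:R).

Let flip_cluster_eq x : (s x == sigma) = false.
Proof. exact/negbTE/flip_cluster_neq. Qed.

Lemma rate_flipE_gamma sigma' : gamma eta e -> c sigma' = (sigma' == sigma)%:R * w.
Proof. by move=> g; rewrite /rate pick_flipE /= g hC; case: eqP; rewrite ?mulr1 ?mul1r ?mul0r. Qed.

Lemma sum_rate_flipE_gamma : gamma eta e -> \sum_sigma' c sigma' = w.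
Proof.
move=> g; under eq_bigr => sigma' _ do rewrite rate_flipE_gamma //.
rewrite (bigD1 sigma) //= eqxx mul1r big1 ?addr0 // => sigma' /negbTE ->.
exact: mul0r.
Qed.

Lemma exists_flip_cluster_endpoint sigma' :
  [exists x, ((x == src e) || (x == tgt e)) && (sigma' == s x)] =
  (sigma' == s (src e)) || (sigma' == s (tgt e)).
Proof.
apply/existsP/orP => [[x /andP[/orP[] /eqP -> ->]] | [] eq_s]; [by left | by right | |].
  by exists (src e); rewrite eqxx eq_s.
by exists (tgt e); rewrite eqxx orbT eq_s.
Qed.

Section NotGamma.
Hypothesis ngamma : ~~ gamma eta e.

Lemma rate_flipE_same : c sigma = (delta sigma e)%:R * w / 2.
Proof.
rewrite /rate pick_flipE /= (negbTE ngamma) eqxx hC exists_flip_cluster_endpoint.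
rewrite ![sigma == _]eq_sym !flip_cluster_eq /=.
by case: (delta sigma e); rewrite /= ?mulr1 ?mul1r ?mul0r // mulrC.
Qed.

Lemma rate_flipE_cluster x : (x == src e) || (x == tgt e) ->
  c (s x) = (eta e == delta sigma e)%:R * w / 4.
Proof.
move=> x_e; rewrite /rate pick_flipE /= (negbTE ngamma) flip_cluster_eq.
rewrite exists_flip_cluster_endpoint.
have -> : (s x == s (src e)) || (s x == s (tgt e)) by case/orP: x_e => /eqP ->; rewrite eqxx ?orbT.
have [eta_delta | _] := eqVneq (eta e) (delta sigma e); last by rewrite !mul0r.
rewrite hC /=; case eta_e : (eta e); rewrite /= ?mulr0 ?mulr1 ?addr0 ?add0r.
  by rewrite mul0r addr0 mul1r mulrC.
rewrite inC_flip_cluster ?delta_flip_cluster_edge -?eta_delta ?eta_e //.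
by rewrite mulr1 mul1r mulrC.
Qed.

Lemma rate_flipE_other sigma' : sigma' != sigma -> sigma' != s (src e) ->
  sigma' != s (tgt e) -> c sigma' = 0.
Proof.
move=> /negbTE n0 /negbTE n1 /negbTE n2.
by rewrite /rate pick_flipE /= (negbTE ngamma) n0 exists_flip_cluster_endpoint n1 n2.
Qed.

Lemma sum_rate_flipE_ngamma :
  \sum_sigma' c sigma' = ((delta sigma e)%:R + (eta e == delta sigma e)%:R) * w / 2.
Proof.
have n12 : s (src e) != s (tgt e) by exact: flip_cluster_src_tgt_neq.
rewrite (bigD1 sigma) //= (bigD1 (s (src e))) ?flip_cluster_eq //=.
rewrite (bigD1 (s (tgt e))) /=; last by rewrite flip_cluster_eq eq_sym n12.
rewrite big1 => [|sigma' /andP[/andP[? ?] ?]]; last exact: rate_flipE_other.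
by rewrite rate_flipE_same !rate_flipE_cluster ?eqxx ?orbT //; field.
Qed.

End NotGamma.
End FlipRates.

Theorem proposition8 (V E : finType) (src tgt : E -> V) (R : realFieldType) (p : R)
  (hp0 : 0 <= p) (hp1 : p <= 1)
  (eta : {ffun E -> bool}) (e : E) (sigma : {ffun V -> bool})
  (hC : inC src tgt eta sigma) :
  let S := \sum_(sigma' : {ffun V -> bool})
             rate src tgt p eta sigma (flipE eta e) sigma' in
  [/\ gamma src tgt eta e -> S = p * (~~ eta e)%:R + (1 - p) * (eta e)%:R,
      ~~ gamma src tgt eta e -> ~~ eta e -> S = p / 2 &
      ~~ gamma src tgt eta e -> eta e -> S = 1 - p].
Proof.
move=> S; split => [g | ng eta_e | ng eta_e]; rewrite /S.
- by rewrite sum_rate_flipE_gamma // addrC.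
- rewrite sum_rate_flipE_ngamma // (negbTE eta_e).
  by case: delta => /=; field.
- have delta_e : delta src tgt sigma e by move/forallP/(_ e): hC; rewrite eta_e.
  by rewrite sum_rate_flipE_ngamma // eta_e delta_e /=; field.
Qed.
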